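(* Let $s$ be an integer with $3\le s\le 8$, and let $P(z)=1+\sum_{k=1}^s a_kz^k$ with real coefficients. Suppose that $P^{(k)}(-2s)\ge 0$ for all $k=0,1,\dots,s$, and that \[ \frac12\left(a_1^2-\frac{(1-a_1)^2}{s}\right)\ge a_2. \] Then $P(z)=\left(1+\frac{z}{2s}\right)^s$. *)

(* real coefficients modelled by an arbitrary real closed field R. *)
From HB Require Import structures.
From mathcomp Require Import all_boot all_order all_algebra.
Set Implicit Arguments. Unset Strict Implicit. Unset Printing Implicit Defensive.
Import Order.TTheory GRing.Theory Num.Theory.
Local Open Scope ring_scope.

Definition Ppoly (R : rcfType) (s : nat) (a : nat -> R) : {poly R} :=
  1 + \sum_(1 <= k < s.+1) a k *: 'X^k.

From HB Require Import structures.
From mathcomp Require Import all_boot all_order all_algebra.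
From mathcomp Require Import ring lra.
Import Order.TTheory GRing.Theory Num.Theory.
Local Open Scope ring_scope.

(* Put d = 2s and expand P around -d:
     P = sum_{i<=s} b_i (X + d)^i,   b_i = P^(i)(-d) / i!  >= 0.
   The numbers w_i = b_i d^i are then nonnegative weights on {0,...,s}, and
   reading off the coefficients of 1, z, z^2 in P gives their binomial moments
     sum w_i = 1,   sum w_i i = d a_1,   sum w_i C(i,2) = d^2 a_2.
   A probability distribution on {0,...,s} has mean m <= s and nonnegative
   variance, m^2 <= 2 sum w_i C(i,2) + m.  Together with the hypothesis on
   a_1, a_2 these two inequalities force a_1 = 1/2, i.e. m = s: the mean sits
   at the top of the support, so all the mass is at s, whence P = b_s (X+d)^s
   with b_s d^s = 1, which is (1 + z/(2s))^s.  The
   argument only uses s >= 2. *)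

Section ShiftedExpansion.
Context {R : comNzRingType} (d : R).

Lemma coef_shifted_exp (i k : nat) :
  (('X + d%:P) ^+ i)`_k = d ^+ (i - k) *+ 'C(i, k).
Proof.
rewrite addrC exprDn coef_sum.
under eq_bigr => j _ do rewrite -polyC_exp coefMn coefCM coefXn.
have [ki | ik] := leqP k i.
  rewrite (bigD1 (Ordinal (ki : (k < i.+1)%N))) //= eqxx mulr1 big1 ?addr0 //.
  move=> j nejk; suff /negbTE-> : k != val j by rewrite mulr0 mul0rn.
  by apply: contra nejk => /eqP kj; apply/eqP/val_inj.
rewrite bin_small // mulr0n big1 // => j _.
suff /negbTE-> : k != val j by rewrite mulr0 mul0rn.
by rewrite neq_ltn (leq_trans (ltn_ord j) ik) orbT.
Qed.

Lemma taylor_shifted {n : nat} {p : {poly R}} :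
  (size p <= n)%N -> p = \sum_(i < n) p^`N(i).[- d] *: ('X + d%:P) ^+ i.
Proof.
move=> size_p.
have := @nderiv_taylor_wide _ n (p^:P) (- d)%:P ('X + d%:P) (mulrC _ _).
rewrite size_map_polyC addrC polyCN addrK => /(_ size_p) expand_p.
rewrite -[LHS]comp_polyXr /comp_poly expand_p; apply: eq_bigr => i _.
by rewrite nderivn_map -polyCN horner_map mul_polyC.
Qed.

Lemma shifted_expansion_coef (b : nat -> R) (n k : nat) :
  d ^+ k * (\sum_(i < n) b i *: ('X + d%:P) ^+ i)`_k
    = \sum_(i < n) b i * d ^+ i *+ 'C(i, k).
Proof.
rewrite coef_sum mulr_sumr; apply: eq_bigr => i _.
rewrite coefZ coef_shifted_exp.
have [ki | ik] := leqP k i; last by rewrite bin_small // !mulr0n !mulr0.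
by rewrite !mulrnAr mulrCA -exprD subnKC.
Qed.

Definition taylor_weight (p : {poly R}) (i : nat) : R := p^`N(i).[- d] * d ^+ i.

Lemma taylor_weight_moment (k : nat) {n : nat} {p : {poly R}} :
  (size p <= n)%N ->
  d ^+ k * p`_k = \sum_(i < n) taylor_weight p i *+ 'C(i, k).
Proof.
move=> size_p; rewrite [in LHS](taylor_shifted size_p).
exact: (shifted_expansion_coef (fun i => p^`N(i).[- d])).
Qed.

Lemma taylor_concentrated {n : nat} {p : {poly R}} : (size p <= n.+1)%N ->
  (forall i, (i < n)%N -> p^`N(i).[- d] = 0) ->
  p = p^`N(n).[- d] *: ('X + d%:P) ^+ n.
Proof.
move=> size_p low_vanish; rewrite [LHS](taylor_shifted size_p).
by rewrite big_ord_recr /= big1 ?add0r // => i _; rewrite low_vanish ?scale0r.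
Qed.

End ShiftedExpansion.

Lemma taylor_weight_ge0 (R : numDomainType) (d : R) (p : {poly R}) (i : nat) :
  0 < d -> 0 <= p^`(i).[- d] -> 0 <= taylor_weight d p i.
Proof.
move=> d_gt0; rewrite nderivn_def hornerMn pmulrn_lge0 ?fact_gt0 // => deriv_ge0.
by rewrite mulr_ge0 // exprn_ge0 // ltW.
Qed.

Section FiniteDistribution.
Context {R : realFieldType} {n : nat} {w : nat -> R}.
Hypothesis w_ge0 : forall i, (i <= n)%N -> 0 <= w i.

Let w_ge0_ord (i : 'I_n.+1) : 0 <= w i.
Proof. by apply: w_ge0; rewrite -ltnS. Qed.

Lemma mean_le_top :
  \sum_(i < n.+1) w i *+ i <= n%:R * \sum_(i < n.+1) w i.
Proof.
rewrite mulr_sumr; apply: ler_sum => i _.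
by rewrite -[w i *+ i]mulr_natr mulrC ler_wpM2r // ler_nat -ltnS.
Qed.

Lemma mean_at_top_concentrated :
  \sum_(i < n.+1) w i *+ i = n%:R * \sum_(i < n.+1) w i ->
  forall i, (i < n)%N -> w i = 0.
Proof.
move=> mean_top i lt_in.
have gap_ge0 (j : 'I_n.+1) : true -> 0 <= w j * (n%:R - j%:R).
  by move=> _; rewrite mulr_ge0 // subr_ge0 ler_nat -ltnS.
have gap_sum : \sum_(j < n.+1) w j * (n%:R - j%:R) = 0.
  rewrite (eq_bigr (fun j : 'I_n.+1 => n%:R * w j - w j *+ j)); last first.
    by move=> j _; rewrite -mulr_natr; ring.
  by rewrite sumrB -mulr_sumr mean_top subrr.
have := psumr_eq0P gap_ge0 gap_sum (isT : true) (i := Ordinal (leqW lt_in)).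
move=> /eqP; rewrite mulf_eq0 subr_eq0 eqr_nat gtn_eqF // orbF => /eqP //.
Qed.

(* Nonnegativity of the variance, expressed through the first two binomial
   moments of a probability distribution. *)
Lemma variance_ge0 : \sum_(i < n.+1) w i = 1 ->
  (\sum_(i < n.+1) w i *+ i) ^+ 2
    <= 2 * \sum_(i < n.+1) w i *+ 'C(i, 2) + \sum_(i < n.+1) w i *+ i.
Proof.
move=> total; set m := \sum_(i < n.+1) w i *+ i.
have spread_ge0 : 0 <= \sum_(i < n.+1) w i * (i%:R - m) ^+ 2.
  by apply: sumr_ge0 => i _; rewrite mulr_ge0 ?sqr_ge0.
have pair_count (i : nat) : 2 * 'C(i, 2)%:R = i%:R * (i%:R - 1) :> R.
  case: i => [|i]; first by rewrite bin0n mulr0 mul0r.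
  have nat_eq : ('C(i.+1, 2) * 2)%N = (i.+1 * i)%N.
    by rewrite -[2%N in LHS]/(2`!) bin_ffact ffactnS ffactn1.
  by rewrite -natrM mulnC nat_eq natrM -natr1 addrK.
suff spread_eq : \sum_(i < n.+1) w i * (i%:R - m) ^+ 2
    = 2 * \sum_(i < n.+1) w i *+ 'C(i, 2) + m - m ^+ 2.
  by move: spread_ge0; rewrite spread_eq subr_ge0.
transitivity (\sum_(i < n.+1) (2 * (w i *+ 'C(i, 2)) + w i *+ i
                               - (2 * m) * (w i *+ i) + m ^+ 2 * w i)).
  apply: eq_bigr => i _.
  rewrite -[w i *+ 'C(i, 2)]mulr_natr -[w i *+ i]mulr_natr.
  by rewrite [2 * (_ * _)]mulrCA pair_count; ring.
rewrite big_split sumrB big_split /= -!mulr_sumr total -/m; ring.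
Qed.

End FiniteDistribution.

(* The scalar heart of the argument: with m = 2 s a_1, the variance bound
   m^2 <= 2 (2s)^2 a_2 + m, the mean bound m <= s and the hypothesis relating
   a_1 and a_2 leave only a_1 = 1/2. *)
Lemma first_coef_half (R : realFieldType) (s a1 a2 : R) : 0 < s ->
  (2 * s * a1) ^+ 2 <= 2 * ((2 * s) ^+ 2 * a2) + 2 * s * a1 ->
  2 * s * a1 <= s ->
  a2 <= 1 / 2 * (a1 ^+ 2 - (1 - a1) ^+ 2 / s) ->
  a1 = 1 / 2.
Proof.
move=> s_gt0 variance mean hyp.
have hyp' : 2 * s * a2 <= s * a1 ^+ 2 - (1 - a1) ^+ 2.
  have -> : s * a1 ^+ 2 - (1 - a1) ^+ 2
          = 2 * s * (1 / 2 * (a1 ^+ 2 - (1 - a1) ^+ 2 / s)).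
    by field; rewrite gt_eqF.
  by rewrite ler_wpM2l // mulr_ge0 // ltW.
have a1_le : a1 <= 1 / 2 by nra.
have scaled : 0 <= s * (a1 - 2 * (1 - a1) ^+ 2) by nra.
have a1_bound : 0 <= a1 - 2 * (1 - a1) ^+ 2 by rewrite -(pmulr_rge0 _ s_gt0).
nra.
Qed.

Lemma normalised_shifted_power (R : fieldType) (b d : R) (s : nat) :
  d != 0 -> b * d ^+ s = 1 ->
  b *: ('X + d%:P) ^+ s = (1 + d^-1 *: 'X) ^+ s.
Proof.
move=> d_neq0 norm_b.
have -> : b = d^-1 ^+ s.
  by apply: (mulIf (expf_neq0 s d_neq0)); rewrite norm_b -exprMn mulVf // expr1n.
by rewrite -exprZn scalerDr scale_polyC mulVf // addrC.
Qed.

Lemma size_Ppoly {R : rcfType} (s : nat) (a : nat -> R) :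
  (size (Ppoly s a) <= s.+1)%N.
Proof.
rewrite /Ppoly; apply: leq_trans (size_polyD _ _) _.
rewrite geq_max size_poly1 /=.
apply: leq_trans (size_sum _ _ _) _.
apply/bigmax_leqP_seq => k; rewrite mem_iota => /andP[_ lt_ks] _.
apply: leq_trans (size_scale_leq _ _) _.
by rewrite size_polyXn; move: lt_ks; rewrite add1n subn1.
Qed.

Lemma Ppoly_coef0 {R : rcfType} (s : nat) (a : nat -> R) : (Ppoly s a)`_0 = 1.
Proof.
rewrite /Ppoly coefD coefC /= coef_sum big_seq big1 ?addr0 // => k.
rewrite mem_index_iota => /andP[k_gt0 _].
by rewrite coefZ coefXn eq_sym (negbTE (lt0n_neq0 k_gt0)) mulr0.
Qed.

Lemma Ppoly_coef {R : rcfType} (s : nat) (a : nat -> R) (j : nat) :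
  (1 <= j <= s)%N -> (Ppoly s a)`_j = a j.
Proof.
case/andP=> j_gt0 j_le_s.
rewrite /Ppoly coefD coefC (negbTE (lt0n_neq0 j_gt0)) add0r coef_sum.
rewrite (bigD1_seq j) /=; last by rewrite iota_uniq.
  rewrite coefZ coefXn eqxx mulr1 big1 ?addr0 // => k k_neq_j.
  by rewrite coefZ coefXn eq_sym (negbTE k_neq_j) mulr0.
by rewrite mem_index_iota j_gt0 ltnS.
Qed.

Theorem lemma2p5 (R : rcfType) (s : nat) (a : nat -> R) :
  (3 <= s)%N -> (s <= 8)%N ->
  (forall k : nat, (k <= s)%N -> 0 <= ((Ppoly s a)^`(k)).[- (2 * s)%:R]) ->
  (1 / 2) * (a 1%N ^+ 2 - (1 - a 1%N) ^+ 2 / s%:R) >= a 2%N ->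
  Ppoly s a = (1 + ((2 * s)%:R)^-1 *: 'X) ^+ s.
Proof.
move=> s_ge3 _ derivs_ge0 hyp.
set d : R := (2 * s)%:R; set P := Ppoly s a; pose w := taylor_weight d P.
have d_gt0 : 0 < d by rewrite ltr0n muln_gt0 (leq_trans _ s_ge3).
have d_eq : d = 2 * s%:R by rewrite /d natrM.
have w_ge0 i : (i <= s)%N -> 0 <= w i.
  by move=> /derivs_ge0; apply: taylor_weight_ge0.
have moment k : d ^+ k * P`_k = \sum_(i < s.+1) w i *+ 'C(i, k).
  exact/taylor_weight_moment/size_Ppoly.
have total : \sum_(i < s.+1) w i = 1.
  have := moment 0%N; rewrite expr0 mul1r Ppoly_coef0 => ->.
  by apply: eq_bigr => i _; rewrite bin0.
have mean : \sum_(i < s.+1) w i *+ i = d * a 1%N.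
  have := moment 1%N; rewrite expr1 Ppoly_coef ?(ltnW (ltnW s_ge3)) // => ->.
  by apply: eq_bigr => i _; rewrite bin1.
have a1_half : a 1%N = 1 / 2.
  apply: (@first_coef_half _ s%:R _ (a 2%N)) hyp.
  - by rewrite ltr0n (leq_trans _ s_ge3).
  - have := variance_ge0 w_ge0 total.
    by rewrite mean -(moment 2%N) Ppoly_coef ?(ltnW s_ge3) // d_eq.
  - by have := mean_le_top w_ge0; rewrite mean total mulr1 d_eq.
have w_low i : (i < s)%N -> w i = 0.
  apply: mean_at_top_concentrated w_ge0 _ i.
  by rewrite mean total a1_half d_eq mulr1; field.
rewrite [LHS](taylor_concentrated d (size_Ppoly s a)); last first.
  move=> i /w_low /eqP; rewrite mulf_eq0 expf_eq0 (gt_eqF d_gt0) andbF orbF.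
  by move=> /eqP.
apply: normalised_shifted_power; first by rewrite gt_eqF.
by move: total; rewrite big_ord_recr /= big1 ?add0r // => i _; apply: w_low.
Qed.
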